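(* Let $h:[\ell,r]\to\mathbb{R}$ be a continuous concave function and $m\in\mathbb{R}$. If $\{x\in[\ell,r): h'_+(x)\leq m\}$ is non-empty, then $x_1=\inf\{x\in[\ell,r): h'_+(x)\leq m\}$ belongs to $\mathrm{xExt}(h)$ and $h'_+(x_1)\leq m$. Similarly, if $\{x\in(\ell,r]: h'_-(x)\geq m\}$ is non-empty, then $x_2=\sup\{x\in(\ell,r]: h'_-(x)\geq m\}$ belongs to $\mathrm{xExt}(h)$ and $h'_-(x_2)\geq m$.
   Context: $h'_\pm(x)=\lim_{y\to x^\pm}\frac{h(y)-h(x)}{y-x}$; $h'_+$ is defined on $[\ell,r)$ with values in $\mathbb{R}\cup\{\infty\}$ and $h'_-$ on $(\ell,r]$ with values in $\mathbb{R}\cup\{-\infty\}$. $\mathrm{xExt}(h)=\{\ell,r\}\cup\{x\in(\ell,r): h|_{[x-\delta,x+\delta]}\text{ is not linear for any }\delta>0\}$. *)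

From HB Require Import structures.
From mathcomp Require Import all_boot all_order all_algebra.
From mathcomp Require Import all_classical all_reals all_analysis.
Set Implicit Arguments. Unset Strict Implicit. Unset Printing Implicit Defensive.
Import Order.TTheory GRing.Theory Num.Theory.
Import numFieldNormedType.Exports.
Local Open Scope classical_set_scope.
Local Open Scope ring_scope.

Definition concave_on (R : realType) (l r : R) (h : R -> R) : Prop :=
  forall x y t : R, l <= x <= r -> l <= y <= r -> 0 <= t <= 1 ->
    (1 - t) * h x + t * h y <= h ((1 - t) * x + t * y).

Definition rderiv (R : realType) (h : R -> R) (x : R) : \bar R :=
  lim ((fun y : R => ((h y - h x) / (y - x))%:E) @ x^'+).

Definition lderiv (R : realType) (h : R -> R) (x : R) : \bar R :=
  lim ((fun y : R => ((h y - h x) / (y - x))%:E) @ x^'-).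

Definition affine_on (R : realType) (a b : R) (h : R -> R) : Prop :=
  exists c d : R, forall y, a <= y <= b -> h y = c * y + d.

Definition xExt (R : realType) (l r : R) (h : R -> R) : set R :=
  [set x | x = l \/ x = r \/
     (l < x < r /\ forall delta : R, 0 < delta ->
        l <= x - delta -> x + delta <= r -> ~ affine_on (x - delta) (x + delta) h)].

From HB Require Import structures.
From mathcomp Require Import all_boot all_order all_algebra.
From mathcomp Require Import all_classical all_reals all_analysis.
From mathcomp Require Import ring lra.
Set Implicit Arguments.
Unset Strict Implicit.
Unset Printing Implicit Defensive.
Import Order.TTheory GRing.Theory Num.Theory.
Import numFieldNormedType.Exports.
Local Open Scope classical_set_scope.
Local Open Scope ring_scope.

(* For concave h the chord slope (h y - h x)/(y - x) decreases in y, so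
   h'_+(x) is the limit of a monotone family of slopes and any bound m on the
   slopes just right of x gives h'_+(x) <= m.  Let x1 = inf S1.  If x1 were
   not in S1, points y of S1 accumulate at x1 from the right; for z > x1 the
   slope from x1 to z is, by right continuity of h, the limit of the slopes
   from y to z, and these are at most h'_+(y) <= m.  Hence h'_+(x1) <= m.  If h
   were affine around an interior x1, h'_+ would be constant there and points
   just left of x1 would lie in S1.  The claim about S2 is the claim about S1
   for the concave function u |-> h(-u) and the bound -m. *)

Definition slope {R : realType} (h : R -> R) (x y : R) : R :=
  (h y - h x) / (y - x).

Section ConcaveSlope.
Variables (R : realType) (l r : R) (h : R -> R).
Hypothesis concave_h : concave_on l r h.

Lemma concave_chord_le a b c : l <= a -> a < b -> b < c -> c <= r ->
  (c - b) * h a + (b - a) * h c <= (c - a) * h b.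
Proof.
move=> la ab bc cr; have ca : 0 < c - a by lra.
have chord : (c - b) / (c - a) * h a + (b - a) / (c - a) * h c <= h b.
  have t01 : 0 <= (b - a) / (c - a) <= 1.
    by rewrite divr_ge0 ?ler_pdivrMr //=; lra.
  have := @concave_h a c ((b - a) / (c - a)).
  have -> : 1 - (b - a) / (c - a) = (c - b) / (c - a) by field; lra.
  have -> : (c - b) / (c - a) * a + (b - a) / (c - a) * c = b by field; lra.
  by apply=> //; lra.
suff -> : (c - b) * h a + (b - a) * h c =
    (c - a) * ((c - b) / (c - a) * h a + (b - a) / (c - a) * h c).
  by rewrite ler_pM2l.
by field; lra.
Qed.

Lemma concave_slope_le a b c : l <= a -> a < b -> b < c -> c <= r ->
  slope h a c <= slope h a b.
Proof.
move=> la ab bc cr; have := concave_chord_le la ab bc cr; rewrite /slope.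
by rewrite ler_pdivrMr ?subr_gt0 ?(lt_trans ab) // mulrAC ler_pdivlMr ?subr_gt0 //; nra.
Qed.

Lemma is_cvg_slope_at_right x : l <= x -> x < r ->
  cvg ((fun y => (slope h x y)%:E) @ x^'+).
Proof.
move=> lx xr; apply: nonincreasing_at_right_is_cvge.
near=> b => y z; rewrite !in_itv /= => /andP[xy yb] /andP[xz zb].
rewrite le_eqVlt lee_fin => /predU1P[->//|yz].
apply: concave_slope_le => //; apply: le_trans (ltW zb) _.
by near: b; exact: nbhs_right_le.
Unshelve. all: by end_near. Qed.

Lemma slope_le_rderiv x z : l <= x -> x < z -> z <= r ->
  ((slope h x z)%:E <= rderiv h x)%E.
Proof.
move=> lx xz zr; apply: lime_ge; first exact: is_cvg_slope_at_right (lt_le_trans xz zr).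
near=> y; rewrite lee_fin.
have : y <= z by near: y; exact: nbhs_right_le.
rewrite le_eqVlt => /predU1P[->//|yz].
by apply: concave_slope_le => //; near: y; exact: nbhs_right_gt.
Unshelve. all: by end_near. Qed.

Lemma rderiv_le x M : l <= x -> x < r ->
  (\forall y \near x^'+, slope h x y <= M) -> (rderiv h x <= M%:E)%E.
Proof.
move=> lx xr slope_le; apply: lime_le; first exact: is_cvg_slope_at_right.
by apply: filterS slope_le => y; rewrite lee_fin.
Qed.

End ConcaveSlope.

Lemma rderiv_affine (R : realType) (h : R -> R) (a b c d x : R) :
  a <= x -> x < b -> (forall y, a <= y <= b -> h y = c * y + d) ->
  rderiv h x = c%:E.
Proof.
move=> ax xb affine_h; apply: cvg_lim => //; apply: cvg_near_cst.
near=> y.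
have xy : x < y by near: y; exact: nbhs_right_gt.
have yb : y <= b by near: y; exact: nbhs_right_le.
rewrite !affine_h ?ax ?(ltW xb) ?yb ?(le_trans ax (ltW xy)) //.
by congr (_%:E); field; lra.
Unshelve. all: by end_near. Qed.

Lemma slope_cvg_at_right (R : realType) (h : R -> R) (x z : R) : x < z ->
  h @ x^'+ --> h x -> (fun y => slope h y z) @ x^'+ --> slope h x z.
Proof.
move=> xz hx; apply: cvgM; first by apply: cvgB => //; exact: cvg_cst.
apply: cvgV; first by rewrite subr_eq0 gt_eqF.
by apply: cvgB; [exact: cvg_cst | apply: cvg_at_right_filter; exact: cvg_id].
Qed.

Lemma inf_right_adherent (R : realType) (S : set R) (P : R -> Prop) :
  has_inf S -> ~ S (inf S) -> (\forall y \near (inf S)^'+, P y) ->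
  exists2 y, S y & P y.
Proof.
move=> infS notS /nbhs_ballP[e /= e0 near_P].
have [y Sy ye] := inf_adherent e0 infS.
have infy : inf S < y.
  rewrite lt_neqAle (ge_inf infS.2 Sy) andbT.
  by apply: contra_notN notS => /eqP->.
exists y => //; apply: near_P (infy).
by rewrite /ball /= distrC ger0_norm; lra.
Qed.

Section InfOfRderivSublevel.
Variables (R : realType) (l r : R) (h : R -> R) (m : R).
Hypothesis concave_h : concave_on l r h.
Hypothesis right_cont : forall x, l <= x -> x < r -> h @ x^'+ --> h x.

Let S1 := [set x : R | l <= x < r /\ (rderiv h x <= m%:E)%E].

Lemma rderiv_sublevel_inf_itv : S1 !=set0 -> l <= inf S1 < r.
Proof.
move=> [y S1y]; have [/andP[ly yr] _] := S1y.
have lbound_l : lbound S1 l by move=> z [/andP[]].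
rewrite lb_le_inf //=; last by exists y.
by apply: le_lt_trans yr; apply: ge_inf S1y; exists l.
Qed.

Lemma rderiv_sublevel_inf_le : S1 !=set0 -> (rderiv h (inf S1) <= m%:E)%E.
Proof.
move=> S1n; have /andP[l_inf inf_r] := rderiv_sublevel_inf_itv S1n.
have [[]//|notS1] := pselect (S1 (inf S1)).
have infS1 : has_inf S1 by split=> //; exists l => z [/andP[]].
apply: (rderiv_le concave_h l_inf inf_r).
near=> z; rewrite leNgt; apply/negP => m_lt_slope.
have inf_z : inf S1 < z by near: z; exact: nbhs_right_gt.
have z_r : z <= r by near: z; exact: nbhs_right_le.
have near_inf : \forall y \near (inf S1)^'+, m < slope h y z /\ y < z.
  near=> y; split; near: y; last exact: nbhs_right_lt.
  exact: cvgr_gt (slope_cvg_at_right inf_z (right_cont l_inf inf_r)) _ m_lt_slope.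
have [y [/andP[l_y _] rderiv_y] [m_lt y_z]] := inf_right_adherent infS1 notS1 near_inf.
have := le_trans (slope_le_rderiv concave_h l_y y_z z_r) rderiv_y.
by rewrite lee_fin leNgt m_lt.
Unshelve. all: by end_near. Qed.

Lemma lbound_rderiv_sublevel_xExt x : l <= x <= r -> lbound S1 x ->
  (rderiv h x <= m%:E)%E -> xExt l r h x.
Proof.
move=> /andP[l_x x_r] lbound_x rderiv_x.
have [->|x_neq_l] := eqVneq x l; first by left.
have [->|x_neq_r] := eqVneq x r; first by right; left.
have x_lt_r : x < r by rewrite lt_neqAle x_neq_r.
right; right; split; first by rewrite lt_def x_neq_l l_x x_lt_r.
move=> d d_gt0 l_xd _ [c [e affine_h]].
have rderiv_c y : x - d <= y -> y < x + d -> rderiv h y = c%:E.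
  by move=> ? ?; exact: rderiv_affine affine_h.
suff : x <= x - d / 2 by lra.
apply: lbound_x; split; first by apply/andP; lra.
by rewrite rderiv_c -?(rderiv_c x) //; lra.
Qed.

Lemma rderiv_sublevel_inf : S1 !=set0 ->
  xExt l r h (inf S1) /\ (rderiv h (inf S1) <= m%:E)%E.
Proof.
move=> S1n; have rderiv_inf := rderiv_sublevel_inf_le S1n; split=> //.
have /andP[l_inf inf_r] := rderiv_sublevel_inf_itv S1n.
apply: lbound_rderiv_sublevel_xExt rderiv_inf; first by rewrite l_inf ltW.
by apply: ge_inf; exists l => z [/andP[]].
Qed.

End InfOfRderivSublevel.

Section Reflection.
Variables (R : realType) (l r : R) (h : R -> R).

Lemma concave_on_reflect :
  concave_on l r h -> concave_on (- r) (- l) (fun u => h (- u)).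
Proof.
move=> concave_h x y t /andP[? ?] /andP[? ?] t01.
have -> : - ((1 - t) * x + t * y) = (1 - t) * - x + t * - y by ring.
by apply: concave_h => //; apply/andP; split; lra.
Qed.

Lemma lderiv_reflect x : concave_on l r h -> l < x -> x <= r ->
  lderiv h x = (- rderiv (fun u => h (- u)) (- x))%E.
Proof.
move=> concave_h l_x x_r.
have cvg_slope : cvg ((fun y => (slope (fun u => h (- u)) (- x) y)%:E) @ (- x)^'+).
  by apply: (is_cvg_slope_at_right (concave_on_reflect concave_h)); lra.
apply: cvg_lim => //; apply/cvg_at_leftNP.
have -> : (fun y => ((h y - h x) / (y - x))%:E) \o -%R =
    (fun w => - (slope (fun u => h (- u)) (- x) w)%:E)%E.
  by apply/funext => w /=; rewrite /slope opprK -opprD invrN mulrN.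
exact: cvgeN cvg_slope.
Qed.

Lemma xExt_reflect x : xExt (- r) (- l) (fun u => h (- u)) (- x) -> xExt l r h x.
Proof.
case=> [|[|[/andP[? ?] not_affine]]]; [by right; left; lra | by left; lra |].
right; right; split; first by apply/andP; lra.
move=> d d_gt0 l_xd xd_r [c [e affine_h]].
apply: (not_affine d d_gt0); [lra | lra |].
exists (- c), e => y /andP[? ?]; rewrite affine_h; first by ring.
by apply/andP; lra.
Qed.

End Reflection.

Lemma lderiv_superlevel_sup (R : realType) (l r : R) (h : R -> R) (m : R) :
  concave_on l r h -> (forall x, l < x -> x <= r -> h @ x^'- --> h x) ->
  let S2 := [set x : R | l < x <= r /\ (m%:E <= lderiv h x)%E] in
  S2 !=set0 -> xExt l r h (sup S2) /\ (m%:E <= lderiv h (sup S2))%E.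
Proof.
move=> concave_h left_cont S2 [x0 S2x0].
pose g u := h (- u).
have right_cont_g u : - r <= u -> u < - l -> g @ u^'+ --> g u.
  move=> ? ?; apply/cvg_at_rightNP.
  have -> : g \o -%R = h by apply/funext => y /=; rewrite /g opprK.
  by rewrite /g; apply: left_cont; lra.
pose S1 := [set u : R | - r <= u < - l /\ (rderiv g u <= (- m)%:E)%E].
have S1E : S1 = -%R @` S2.
  apply/seteqP; split=> [u [/andP[? ?] rderiv_u]|_ [x [/andP[l_x x_r] lderiv_x] <-]].
    have l_x : l < - u by lra.
    have x_r : - u <= r by lra.
    exists (- u); last by rewrite opprK.
    by split; [rewrite l_x | rewrite (lderiv_reflect concave_h l_x x_r) opprK leeNr -EFinN].
  split; first by apply/andP; lra.
  by move: lderiv_x; rewrite (lderiv_reflect concave_h l_x x_r) leeNr -EFinN.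
have inf_S1 : inf S1 = - sup S2 by rewrite S1E /inf setNK.
have S1n : S1 !=set0 by rewrite S1E; exists (- x0), x0.
have [xExt_g rderiv_g] :=
  rderiv_sublevel_inf (concave_on_reflect concave_h) right_cont_g S1n.
have /andP[r_inf inf_l] := rderiv_sublevel_inf_itv S1n.
rewrite inf_S1 in xExt_g rderiv_g r_inf inf_l; split; first exact: xExt_reflect.
have l_sup : l < sup S2 by lra.
have sup_r : sup S2 <= r by lra.
by rewrite (lderiv_reflect concave_h l_sup sup_r) leeNr -EFinN.
Qed.

Lemma within_itvcc_cvg_at_right (R : realType) (l r x : R) (h : R -> R) :
  {within `[l, r], continuous h} -> l <= x -> x < r -> h @ x^'+ --> h x.
Proof.
move=> cont_h l_x x_r; have l_r : l < r by lra.
have [cont_in cont_l _] := (continuous_within_itvP h l_r).1 cont_h.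
move: l_x; rewrite le_eqVlt => /predU1P[<-//|l_x].
by apply: cvg_at_right_filter; apply: cont_in; rewrite in_itv /= l_x x_r.
Qed.

Lemma within_itvcc_cvg_at_left (R : realType) (l r x : R) (h : R -> R) :
  {within `[l, r], continuous h} -> l < x -> x <= r -> h @ x^'- --> h x.
Proof.
move=> cont_h l_x x_r; have l_r : l < r by lra.
have [cont_in _ cont_r] := (continuous_within_itvP h l_r).1 cont_h.
move: x_r; rewrite le_eqVlt => /predU1P[->//|x_r].
by apply: cvg_at_left_filter; apply: cont_in; rewrite in_itv /= l_x x_r.
Qed.

Unset Implicit Arguments.

Theorem mainTheorem18 (R : realType) (l r : R) (h : R -> R) (m : R) :
  {within `[l, r], continuous h} ->
  concave_on l r h ->
  (let S1 := [set x : R | l <= x < r /\ (rderiv h x <= m%:E)%E] in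
   S1 !=set0 ->
   xExt l r h (inf S1) /\ (rderiv h (inf S1) <= m%:E)%E) /\
  (let S2 := [set x : R | l < x <= r /\ (m%:E <= lderiv h x)%E] in
   S2 !=set0 ->
   xExt l r h (sup S2) /\ (m%:E <= lderiv h (sup S2))%E).
Proof.
move=> cont_h concave_h; split.
  apply: rderiv_sublevel_inf concave_h _ => x.
  exact: within_itvcc_cvg_at_right cont_h.
apply: lderiv_superlevel_sup concave_h _ => x.
exact: within_itvcc_cvg_at_left cont_h.
Qed.
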